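(* Let $G=(X,E,w)$ be a connected weighted graph with total weight $W$, $M\subseteq X$ nonempty, $\sigma$ a probability distribution with $S=\mathrm{supp}(\sigma)\subseteq X\setminus M$, and $C>0$. Let $G'$ be the weighted graph on $X'=\{0,1\}\times X$ with weights $w'_{(0,u),(0,v)}=w_{u,v}$ for all $u,v\in X$, $w'_{(0,u),(1,u)}=w'_{(1,u),(0,u)}=\sigma_uW/C$ for all $u\in X$, and all other weights $0$; let $W'$, $\pi'$, $R'$, $C'$ denote the corresponding quantities on $G'$, $S'=\{1\}\times S$, $M'=\{0\}\times M$. Then $\pi'(S')=\frac{1}{C+2}$. Moreover, if $\rho$ is a probability distribution on $S$ with $\sum_{u\in S}\rho_u^2/\sigma_u=1/p$, and $\rho'$ is the distribution on $X'$ with $\rho'_{(1,u)}=\rho_u$ (zero elsewhere), then \[ C'_{\rho',M'}=\Big(\frac{C_{\rho,M}}{C}+\frac1p\Big)(C+2), \qquad\text{and hence}\qquad \frac{1}{C'_{S',M'}\,\pi'(S')}\ge\frac12\min\Big\{p,\frac{C}{C_{\rho,M}}\Big\}. \]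
   Context: For a weighted graph: $w_u=\sum_vw_{u,v}$, $W=\sum_{u,v}w_{u,v}$ (sum over ordered pairs), $\pi_u=w_u/W$, $\pi(A)=\sum_{u\in A}\pi_u$. A unit flow from a distribution $\sigma$ supported outside $M$ to $M$ is $p:X\times X\to\mathbb R$ with $p_{u,v}=0$ if $w_{u,v}=0$, $p_{u,v}=-p_{v,u}$, $\sum_vp_{u,v}=\sigma_u$ for $u\notin M$, $\sum_{u\in M}\sum_{v\notin M}p_{u,v}=-1$. $R_{\sigma,M}=\min_p\sum_{\{u,v\}}p_{u,v}^2/w_{u,v}$ (unordered pairs), $C_{\sigma,M}=WR_{\sigma,M}$, $R_{S,M}=\min_{\sigma:\mathrm{supp}\sigma\subseteq S}R_{\sigma,M}$, $C_{S,M}=WR_{S,M}$. *)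

From HB Require Import structures.
From Stdlib Require Import Reals ClassicalEpsilon Relation_Operators.
From mathcomp Require Import all_boot.

Set Implicit Arguments.
Unset Strict Implicit.
Unset Printing Implicit Defensive.

Local Open Scope R_scope.

HB.instance Definition _ := Monoid.isComLaw.Build R R0 Rplus
  (fun a b c => esym (Rplus_assoc a b c)) Rplus_comm Rplus_0_l.

Notation "\rsum_ ( i : T ) F" := (\big[Rplus/R0]_(i : T) F)
  (at level 41, F at level 41, i at level 50).
Notation "\rsum_ ( i 'in' A ) F" := (\big[Rplus/R0]_(i in A) F)
  (at level 41, F at level 41, i, A at level 50).

Section Graph.
Variable X : finType.
Implicit Types (w p : X -> X -> R) (sigma : X -> R) (M S : {set X}).

Definition weighted_graph w : Prop :=
  (forall u v, 0 <= w u v) /\ (forall u v, w u v = w v u).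

Definition connected w : Prop :=
  forall u v, clos_refl_trans X (fun a b => 0 < w a b) u v.

Definition wdeg w u : R := \rsum_(v : X) w u v.
Definition Wtot w : R := \rsum_(u : X) wdeg w u.
Definition pi w u : R := wdeg w u / Wtot w.
Definition piset w (A : {set X}) : R := \rsum_(u in A) pi w u.

Definition distribution sigma : Prop :=
  (forall u, 0 <= sigma u) /\ \rsum_(u : X) sigma u = 1.

Definition supp_sub sigma (A : {set X}) : Prop :=
  forall u, sigma u <> 0 -> u \in A.

Definition unit_flow w sigma M p : Prop :=
  (forall u v, w u v = 0 -> p u v = 0) /\
  (forall u v, p u v = - p v u) /\
  (forall u, u \notin M -> \rsum_(v : X) p u v = sigma u) /\
  \rsum_(u in M) \rsum_(v in ~: M) p u v = -1.

(* energy  sum over unordered pairs {u,v} of p_{u,v}^2 / w_{u,v}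
   (terms with w_{u,v} = 0 vanish since then p_{u,v} = 0; diagonal terms
   vanish by antisymmetry); written as half the sum over ordered pairs. *)
Definition energy w p : R :=
  / 2 * \rsum_(u : X) \rsum_(v : X)
          (if Rlt_dec 0 (w u v) then (p u v)^2 / w u v else 0).

End Graph.

Definition is_glb (P : R -> Prop) (m : R) : Prop :=
  (forall x, P x -> m <= x) /\ (forall b, (forall x, P x -> b <= x) -> b <= m).
Definition Rinf (P : R -> Prop) : R := epsilon (inhabits R0) (is_glb P).

Section Resistance.
Variable X : finType.
Implicit Types (w p : X -> X -> R) (sigma : X -> R) (M S : {set X}).

(* R_{sigma,M} = min over unit flows of the energy (taken as the infimum;
   the minimum is attained). *)
Definition Reff w sigma M : R :=
  Rinf (fun e => exists p, unit_flow w sigma M p /\ e = energy w p).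
Definition Ceff w sigma M : R := Wtot w * Reff w sigma M.

Definition Reff_set w S M : R :=
  Rinf (fun r => exists sigma, distribution sigma /\ supp_sub sigma S /\
                               r = Reff w sigma M).
Definition Ceff_set w S M : R := Wtot w * Reff_set w S M.

End Resistance.

(* The doubled graph G' on X' = bool * X (false = layer 0, true = layer 1). *)
Definition doubled (X : finType) (w : X -> X -> R) (sigma : X -> R) (C : R)
  : bool * X -> bool * X -> R :=
  fun a b =>
    match a, b with
    | (false, u), (false, v) => w u v
    | (false, u), (true, v) | (true, u), (false, v) =>
        if u == v then sigma u * Wtot w / C else 0
    | (true, _), (true, _) => 0
    end.

Definition lift1 (X : finType) (rho : X -> R) : bool * X -> R :=
  fun a => if a.1 then rho a.2 else 0.

(* In G' every source (true, u) is a pendant vertex hanging from (false, u) by a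
   rung of weight sigma_u W / C, so W' = W (C + 2) / C and pi'(S') = 1 / (C + 2).
   A unit flow from rho' to M' must push exactly rho_u down the rung at u and is
   otherwise a unit flow from rho to M in G, so
   R'_{rho',M'} = R_{rho,M} + (C / W) sum_u rho_u^2 / sigma_u, which gives C'.
   By Cauchy-Schwarz the rung energy of any distribution on S is at least C / W;
   hence C'_{S',M'} pi'(S') = W R'_{S',M'} / C lies between 1 and
   C_{rho,M} / C + 1 / p, and the final bound is elementary. *)

From Pilot Require Import Defs.
From HB Require Import structures.
From Stdlib Require Import Reals ClassicalEpsilon Relation_Operators Lra.
From Stdlib Require Import FunctionalExtensionality.
From mathcomp Require Import all_boot.

Set Implicit Arguments.
Unset Strict Implicit.
Unset Printing Implicit Defensive.

Local Open Scope R_scope.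

Section RealSums.
Variables (I : Type) (r : seq I) (P : pred I).
Implicit Types F G : I -> R.

Lemma big_Rmult_l c F :
  \big[Rplus/R0]_(i <- r | P i) (c * F i) = c * \big[Rplus/R0]_(i <- r | P i) F i.
Proof. by apply: (big_rec2 (fun a b => a = c * b)) => [|i a b _ ->]; ring. Qed.

Lemma big_Rplus F G :
  \big[Rplus/R0]_(i <- r | P i) (F i + G i)
  = \big[Rplus/R0]_(i <- r | P i) F i + \big[Rplus/R0]_(i <- r | P i) G i.
Proof. exact: big_split. Qed.

Lemma big_Ropp F :
  \big[Rplus/R0]_(i <- r | P i) (- F i) = - \big[Rplus/R0]_(i <- r | P i) F i.
Proof. by apply: (big_rec2 (fun a b => a = - b)) => [|i a b _ ->]; ring. Qed.

Lemma big_Rminus F G :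
  \big[Rplus/R0]_(i <- r | P i) (F i - G i)
  = \big[Rplus/R0]_(i <- r | P i) F i - \big[Rplus/R0]_(i <- r | P i) G i.
Proof. by rewrite big_Rplus big_Ropp. Qed.

Lemma big_Rle F G : (forall i, P i -> F i <= G i) ->
  \big[Rplus/R0]_(i <- r | P i) F i <= \big[Rplus/R0]_(i <- r | P i) G i.
Proof.
move=> FG; apply: (big_rec2 (fun a b => a <= b)) => [|i a b Pi ab]; first lra.
by have := FG i Pi; lra.
Qed.

Lemma big_Rge0 F : (forall i, P i -> 0 <= F i) -> 0 <= \big[Rplus/R0]_(i <- r | P i) F i.
Proof.
move=> F0; apply: (big_rec (fun a => 0 <= a)) => [|i a Pi a0]; first lra.
by have := F0 i Pi; lra.
Qed.

End RealSums.

Section FinRealSums.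
Variable T : finType.
Implicit Types F : T -> R.

Lemma rsum_ge_term F j : (forall i, 0 <= F i) -> F j <= \rsum_(i : T) F i.
Proof.
move=> F0; rewrite (bigD1 j) //=.
match goal with |- _ <= _ + ?s => suff : 0 <= s by lra end.
by apply: big_Rge0 => i _; apply: F0.
Qed.

Lemma rsum_only F y : (forall v, v != y -> F v = 0) -> \rsum_(v : T) F v = F y.
Proof. by move=> F0; rewrite (bigD1 y) //= big1 ?Rplus_0_r // => v /F0. Qed.

End FinRealSums.

Lemma rsum_layers (X : finType) (F : bool * X -> R) :
  \rsum_(a : bool * X) F a = \rsum_(u : X) F (true, u) + \rsum_(u : X) F (false, u).
Proof.
have -> : \rsum_(a : bool * X) F a = \rsum_(b : bool) \rsum_(u : X) F (b, u).
  by rewrite pair_big; apply: eq_bigr => -[].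
exact: big_bool.
Qed.

Section Infimum.
Implicit Types (P Q : R -> Prop).

Lemma is_glb_unique P m1 m2 : is_glb P m1 -> is_glb P m2 -> m1 = m2.
Proof. by move=> [lb1 gr1] [lb2 gr2]; apply: Rle_antisym; [apply: gr2|apply: gr1]. Qed.

Lemma Rinf_eq P m : is_glb P m -> Rinf P = m.
Proof. by move=> Pm; apply: (is_glb_unique _ Pm); apply: epsilon_spec; exists m. Qed.

(* Completeness of R, applied to the reflected set [-P]. *)
Lemma Rinf_glb P L : (exists x, P x) -> (forall x, P x -> L <= x) -> is_glb P (Rinf P).
Proof.
move=> [x Px] lbL.
have ub : bound (fun y => P (- y)).
  by exists (- L) => y /lbL; lra.
have ne : exists y, P (- y) by exists (- x); rewrite Ropp_involutive.
have [m [ub_m lub_m]] := completeness _ ub ne.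
suff glb_m : is_glb P (- m) by rewrite (Rinf_eq glb_m).
split=> [z Pz | b lb_b].
- have : - z <= m by apply: ub_m; rewrite Ropp_involutive.
  lra.
- have : m <= - b by apply: lub_m => y /lb_b; lra.
  lra.
Qed.

Lemma Rinf_shift P Q L k : (exists x, P x) -> (forall x, P x -> L <= x) ->
  (forall e, Q e <-> P (e - k)) -> Rinf Q = Rinf P + k.
Proof.
move=> Pne lbL QP; have [lbP grP] := Rinf_glb Pne lbL.
apply: Rinf_eq; split=> [e /QP /lbP | b lb_b]; first lra.
suff : b - k <= Rinf P by lra.
apply: grP => x Px; have : Q (x + k) by apply/QP; rewrite (_ : x + k - k = x) //; ring.
by move/lb_b; lra.
Qed.

End Infimum.

(* For [a <= 0], including Rocq's junk value [C / 0 = 0], the right-hand side is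
   nonpositive. *)
Lemma half_min_le_inv C p a x : 0 < C -> 0 < p -> 0 < x -> x <= a / C + 1 / p ->
  1 / x >= 1 / 2 * Rmin p (C / a).
Proof.
move=> C0 p0 x0 xle.
have ix : 1 / x * x = 1 by field; lra.
have ix0 : 0 < 1 / x by apply: Rdiv_lt_0_compat; lra.
set m := Rmin p (C / a).
have [m0 | m_le0] := Rlt_or_le 0 m; last lra.
have a0 : 0 < a.
  have Ca0 : 0 < C / a by apply: (Rlt_le_trans _ m); [| apply: Rmin_r].
  have [a0 | [a0 | a0]] := Rtotal_order 0 a => //.
  - by rewrite -a0 Rdiv_0_r in Ca0; lra.
  - have : C / a < 0 by apply: Rdiv_pos_neg.
    lra.
have ma : m * (a / C) <= C / a * (a / C).
  by apply: Rmult_le_compat_r; [apply: Rlt_le; apply: Rdiv_lt_0_compat | apply: Rmin_r].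
have mp : m * (1 / p) <= p * (1 / p).
  by apply: Rmult_le_compat_r; [apply: Rlt_le; apply: Rdiv_lt_0_compat; lra | apply: Rmin_l].
rewrite (_ : C / a * (a / C) = 1) in ma; last by field; lra.
rewrite (_ : p * (1 / p) = 1) in mp; last by field; lra.
have mx : m * x <= 2 by nra.
nra.
Qed.

Lemma clos_rt_step (T : Type) (e : T -> T -> Prop) x y :
  clos_refl_trans T e x y -> x <> y -> exists a b, e a b.
Proof.
elim=> {x y} [x y exy _ | x xx | x y z _ IHxy _ IHyz xz]; [by exists x, y | by [] |].
by case: (classic (x = y)) => [exy | /IHxy //]; apply: IHyz; rewrite -exy.
Qed.

Section Flows.
Variable T : finType.
Implicit Types (w p : T -> T -> R) (d tau : T -> R) (M : {set T}).

Definition is_flow w p d : Prop :=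
  (forall u v, w u v = 0 -> p u v = 0) /\
  (forall u v, p u v = - p v u) /\
  (forall u, \rsum_(v : T) p u v = d u).

Definition kdelta (x z : T) : R := if x == z then 1 else 0.

Lemma is_flow_add w p1 p2 d1 d2 : is_flow w p1 d1 -> is_flow w p2 d2 ->
  is_flow w (fun u v => p1 u v + p2 u v) (fun u => d1 u + d2 u).
Proof.
move=> [s1 [a1 div1]] [s2 [a2 div2]]; split; [|split] => [u v w0 | u v | u].
- by rewrite s1 // s2 //; ring.
- by rewrite a1 a2; ring.
- by rewrite big_Rplus div1 div2.
Qed.

Lemma is_flow_lincomb w (c : T -> R) (f : T -> T -> T -> R) (g : T -> T -> R) :
  (forall x, is_flow w (f x) (g x)) ->
  is_flow w (fun u v => \rsum_(x : T) c x * f x u v) (fun u => \rsum_(x : T) c x * g x u).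
Proof.
move=> fl; split; [|split] => [u v w0 | u v | u].
- by apply: big1 => x _; rewrite (proj1 (fl x)) // Rmult_0_r.
- by rewrite -big_Ropp; apply: eq_bigr => x _; rewrite (proj1 (proj2 (fl x))); ring.
- rewrite exchange_big; apply: eq_bigr => x _.
  by rewrite big_Rmult_l (proj2 (proj2 (fl x))).
Qed.

Lemma path_flow w : (forall u v, w u v = w v u) ->
  forall x y, clos_refl_trans T (fun a b => 0 < w a b) x y ->
  exists p, is_flow w p (fun z => kdelta x z - kdelta y z).
Proof.
move=> wC x y; elim=> {x y} [x y wxy | x | x y z _ [p1 fl1] _ [p2 fl2]].
- exists (fun u v => kdelta x u * kdelta y v - kdelta y u * kdelta x v).
  rewrite /kdelta; split; [|split] => [u v w0 | u v | u].
  + have wyx : 0 < w y x by rewrite wC.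
    by do 4!case: eqP => [?|_]; subst; lra.
  + by do 4!case: eqP => _; ring.
  + rewrite big_Rminus !big_Rmult_l.
    rewrite (rsum_only (y := y)) ?eqxx => [|v /negbTE]; last by rewrite eq_sym => ->.
    rewrite (rsum_only (y := x)) ?eqxx => [|v /negbTE]; last by rewrite eq_sym => ->.
    ring.
- by exists (fun _ _ => 0); split; [|split] => *; rewrite ?big1 //; lra.
- exists (fun u v => p1 u v + p2 u v).
  have [s [a div]] := is_flow_add fl1 fl2; split; [|split] => // u.
  by rewrite div; ring.
Qed.

(* Superpose the path flows from each [x] to [m0], with weights [d x]. *)
Lemma flow_to_sink w d m0 : (forall u v, w u v = w v u) -> connected w ->
  exists p, is_flow w p (fun z => d z - kdelta m0 z * \rsum_(x : T) d x).
Proof.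
move=> wC wconn.
have [f flf] := choice _ (fun x => path_flow wC (wconn x m0)).
exists (fun u v => \rsum_(x : T) d x * f x u v).
have [s [a div]] := is_flow_lincomb d flf; split; [|split] => // z.
rewrite div; under eq_bigr do rewrite Rmult_minus_distr_l.
rewrite big_Rminus -big_Rmult_l; congr (_ - _); last by apply: eq_bigr => x _; ring.
by rewrite (rsum_only (y := z)) /kdelta ?eqxx ?Rmult_1_r // => x /negbTE ->; ring.
Qed.

(* Inside [~: M] the flow cancels by antisymmetry, so all the divergence of
   [~: M] crosses into [M]. *)
Lemma flow_into_sink p tau M : (forall u v, p u v = - p v u) ->
  (forall u, u \notin M -> \rsum_(v : T) p u v = tau u) ->
  \rsum_(u in ~: M) tau u = 1 ->
  \rsum_(u in M) \rsum_(v in ~: M) p u v = -1.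
Proof.
move=> pa div tau1.
have rowC u : \rsum_(v in M) p u v = \rsum_(v : T) p u v - \rsum_(v in ~: M) p u v.
  rewrite [\rsum_(v : T) _](bigID (mem M)) /=.
  by under [X in _ + X]eq_bigl do rewrite -in_setC; ring.
have inside : \rsum_(u in ~: M) \rsum_(v in ~: M) p u v = 0.
  suff : \rsum_(u in ~: M) \rsum_(v in ~: M) p u v
         = - \rsum_(u in ~: M) \rsum_(v in ~: M) p u v by lra.
  rewrite {1}exchange_big -big_Ropp; apply: eq_bigr => v _.
  by rewrite -big_Ropp; apply: eq_bigr => u _; rewrite pa.
have out : \rsum_(u in ~: M) \rsum_(v in M) p u v = 1.
  under eq_bigr do rewrite rowC.
  rewrite big_Rminus inside Rminus_0_r -tau1.
  by apply: eq_bigr => u; rewrite in_setC; apply: div.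
suff -> : \rsum_(u in M) \rsum_(v in ~: M) p u v
          = - \rsum_(u in ~: M) \rsum_(v in M) p u v by rewrite out; ring.
rewrite exchange_big -big_Ropp; apply: eq_bigr => v _.
by rewrite -big_Ropp; apply: eq_bigr => u _; rewrite pa.
Qed.

Lemma unit_flow_of_div w p tau M : distribution tau ->
  (forall u, u \in M -> tau u = 0) ->
  (forall u v, w u v = 0 -> p u v = 0) -> (forall u v, p u v = - p v u) ->
  (forall u, u \notin M -> \rsum_(v : T) p u v = tau u) -> unit_flow w tau M p.
Proof.
move=> [_ tau1] tauM s a div; split; [|split; [|split]] => //.
apply: flow_into_sink a div _; rewrite -tau1 [RHS](bigID (fun u => u \in M)) /=.
rewrite [X in _ = X + _]big1 ?Rplus_0_l; last exact: tauM.
by apply: eq_bigl => u; rewrite in_setC.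
Qed.

Lemma unit_flow_exists w tau M : weighted_graph w -> connected w -> M != set0 ->
  distribution tau -> (forall u, u \in M -> tau u = 0) -> exists p, unit_flow w tau M p.
Proof.
move=> [_ wC] wconn /set0Pn[m0 m0M] taud tauM.
have [p [s [a div]]] := flow_to_sink tau m0 wC wconn.
exists p; apply: unit_flow_of_div => // u uM.
have m0u : m0 != u by apply: contraNneq uM => <-.
by rewrite div (proj2 taud) /kdelta (negbTE m0u); ring.
Qed.

Definition edge_energy w p u v : R :=
  if Rlt_dec 0 (w u v) then p u v ^ 2 / w u v else 0.

Lemma energyE w p : energy w p = / 2 * \rsum_(u : T) \rsum_(v : T) edge_energy w p u v.
Proof. by []. Qed.

Lemma edge_energy_eq0 w p u v : w u v = 0 -> edge_energy w p u v = 0.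
Proof. by rewrite /edge_energy => ->; case: Rlt_dec => /=; lra. Qed.

Lemma edge_energy_ge0 w p u v : 0 <= edge_energy w p u v.
Proof.
rewrite /edge_energy; case: Rlt_dec => [w0|_] /=; last lra.
by apply: Rmult_le_pos; [apply: pow2_ge_0 | apply: Rlt_le; apply: Rinv_0_lt_compat].
Qed.

Lemma energy_ge0 w p : 0 <= energy w p.
Proof.
rewrite energyE; apply: Rmult_le_pos; first lra.
by do 2!apply: big_Rge0 => ? _; apply: edge_energy_ge0.
Qed.

Lemma Reff_glb w tau M : weighted_graph w -> connected w -> M != set0 ->
  distribution tau -> (forall u, u \in M -> tau u = 0) ->
  is_glb (fun e => exists p, unit_flow w tau M p /\ e = energy w p) (Reff w tau M).
Proof.
move=> wg wconn M0 taud tauM; have [p fl] := unit_flow_exists wg wconn M0 taud tauM.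
apply: (Rinf_glb (L := 0)); first by exists (energy w p), p.
by move=> _ [q [_ ->]]; apply: energy_ge0.
Qed.

Lemma Reff_ge0 w tau M : weighted_graph w -> connected w -> M != set0 ->
  distribution tau -> (forall u, u \in M -> tau u = 0) -> 0 <= Reff w tau M.
Proof.
move=> wg wconn M0 taud tauM; apply: (proj2 (Reff_glb wg wconn M0 taud tauM)).
by move=> _ [q [_ ->]]; apply: energy_ge0.
Qed.

End Flows.

Lemma lift1_distribution (X : finType) (rho : X -> R) :
  distribution rho -> distribution (lift1 rho).
Proof.
move=> [rho0 rho1]; split; first by case=> -[] u; rewrite /lift1 /=; [apply: rho0 | lra].
by rewrite rsum_layers [X in _ + X]big1 // Rplus_0_r.
Qed.

Section DoubledGraph.
Context {X : finType} {w : X -> X -> R} {sigma : X -> R} {C : R} {M S : {set X}}.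
Hypothesis wg : weighted_graph w.
Hypothesis wconn : connected w.
Hypothesis M0 : M != set0.
Hypothesis sigmad : distribution sigma.
Hypothesis suppS : forall u, u \in S <-> sigma u <> 0.
Hypothesis SM : [disjoint S & M].
Hypothesis C0 : 0 < C.

Local Notation W := (Wtot w).
Local Notation w' := (doubled w sigma C).
Local Notation S' := [set a : bool * X | a.1 && (a.2 \in S)].
Local Notation M' := [set a : bool * X | ~~ a.1 && (a.2 \in M)].

Let rung u := sigma u * W / C.

Lemma sigma_eq0 u : u \notin S -> sigma u = 0.
Proof. by move=> uS; apply: NNPP => /suppS; apply/negP. Qed.

Lemma sigma_gt0 u : u \in S -> 0 < sigma u.
Proof. by move=> /suppS su; have := proj1 sigmad u; lra. Qed.

Lemma Wtot_gt0 : 0 < W.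
Proof.
have [u uS] : exists u, u \in S.
  apply: NNPP => noS; suff : \rsum_(u : X) sigma u = 0 by rewrite (proj2 sigmad); lra.
  by apply: big1 => u _; apply: sigma_eq0; apply/negP => uS; apply: noS; exists u.
have [m mM] := set0Pn _ M0.
have um : u <> m by move=> eum; move: (disjointFr SM uS); rewrite eum mM.
have [a [b wab]] := clos_rt_step (wconn u m) um.
have w0 := proj1 wg; apply: (Rlt_le_trans _ _ _ wab); apply: (Rle_trans _ (wdeg w a)).
  by apply: rsum_ge_term.
by apply: rsum_ge_term => a'; apply: big_Rge0.
Qed.

Lemma rung_eq0 u : u \notin S -> rung u = 0.
Proof. by move=> /sigma_eq0; rewrite /rung => ->; rewrite /Rdiv !Rmult_0_l. Qed.

Lemma rung_gt0 u : u \in S -> 0 < rung u.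
Proof.
move=> /sigma_gt0 su; have W0 := Wtot_gt0.
by apply: Rdiv_lt_0_compat => //; apply: Rmult_lt_0_compat.
Qed.

Lemma rsum_rung : \rsum_(u : X) rung u = W / C.
Proof.
rewrite -[RHS]Rmult_1_r -(proj2 sigmad) -big_Rmult_l.
by apply: eq_bigr => u _; rewrite /rung; field; lra.
Qed.

Lemma wdeg_doubled_true u : wdeg w' (true, u) = rung u.
Proof.
rewrite /wdeg rsum_layers big1 // Rplus_0_l (rsum_only (y := u)) /= ?eqxx //.
by move=> v /negbTE; rewrite eq_sym => ->.
Qed.

Lemma wdeg_doubled_false u : wdeg w' (false, u) = wdeg w u + rung u.
Proof.
rewrite /wdeg rsum_layers Rplus_comm; congr (_ + _).
by rewrite (rsum_only (y := u)) /= ?eqxx // => v /negbTE; rewrite eq_sym => ->.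
Qed.

Lemma Wtot_doubled : Wtot w' = W * (C + 2) / C.
Proof.
rewrite /Wtot rsum_layers.
under eq_bigr do rewrite wdeg_doubled_true.
under [X in _ + X]eq_bigr do rewrite wdeg_doubled_false.
by rewrite big_Rplus rsum_rung -/(Wtot w); field; lra.
Qed.

Lemma piset_doubled : piset w' S' = 1 / (C + 2).
Proof.
rewrite /piset big_mkcond rsum_layers [X in _ + X]big1 ?Rplus_0_r => [|u _];
  last by rewrite inE.
rewrite (eq_bigr (fun u => / Wtot w' * rung u)) => [|u _].
  have W0 := Wtot_gt0.
  by rewrite big_Rmult_l rsum_rung Wtot_doubled; field; lra.
rewrite inE /= /Defs.pi wdeg_doubled_true Rmult_comm.
by case: ifP => // /negbT /rung_eq0 ->; ring.
Qed.

Definition cross_energy (tau : X -> R) : R :=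
  \rsum_(u : X) (if Rlt_dec 0 (rung u) then tau u ^ 2 / rung u else 0).

Lemma energy_doubled (P : bool * X -> bool * X -> R) tau :
  (forall a b, P a b = - P b a) -> (forall u, P (true, u) (false, u) = tau u) ->
  energy w' P = energy w (fun u v => P (false, u) (false, v)) + cross_energy tau.
Proof.
move=> Pa Ptau; pose ce u := if Rlt_dec 0 (rung u) then tau u ^ 2 / rung u else 0.
have cross u b : \rsum_(v : X) edge_energy w' P (b, u) (~~ b, v) = ce u.
  rewrite (rsum_only (y := u)) => [|v vu]; last first.
    by apply: edge_energy_eq0; case: b => /=; rewrite eq_sym (negbTE vu).
  rewrite /edge_energy /ce; case: b => /=; rewrite eqxx ?Ptau //.
  by rewrite Pa Ptau (_ : - tau u * (- tau u * 1) = tau u * (tau u * 1)) //; ring.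
have row_true u : \rsum_(b : bool * X) edge_energy w' P (true, u) b = ce u.
  rewrite rsum_layers big1 ?Rplus_0_l => [|v _]; first exact: cross u true.
  exact: edge_energy_eq0.
have row_false u : \rsum_(b : bool * X) edge_energy w' P (false, u) b
    = ce u + \rsum_(v : X) edge_energy w (fun u v => P (false, u) (false, v)) u v.
  by rewrite rsum_layers (cross u false).
rewrite !energyE rsum_layers (eq_bigr _ (fun u _ => row_true u)).
rewrite (eq_bigr _ (fun u _ => row_false u)) big_Rplus.
by rewrite (_ : cross_energy tau = \rsum_(u : X) ce u) //; field.
Qed.

Section Lift.
Variable tau : X -> R.
Hypothesis taud : distribution tau.
Hypothesis tauS : supp_sub tau S.

Lemma tau_eq0 u : u \notin S -> tau u = 0.
Proof. by move=> uS; apply: NNPP => /tauS; apply/negP. Qed.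

Lemma tau_eq0_M u : u \in M -> tau u = 0.
Proof. by move=> uM; apply: tau_eq0; rewrite (disjointFl SM uM). Qed.

Lemma tau_eq0_rung u : rung u = 0 -> tau u = 0.
Proof.
move=> r0; apply: tau_eq0; apply/negP => /rung_gt0; lra.
Qed.

Lemma lift1_eq0_M' a : a \in M' -> lift1 tau a = 0.
Proof. by case: a => -[] u; rewrite inE. Qed.

Definition lift_flow (p : X -> X -> R) (a b : bool * X) : R :=
  match a, b with
  | (false, u), (false, v) => p u v
  | (true, u), (false, v) => if u == v then tau u else 0
  | (false, u), (true, v) => if u == v then - tau u else 0
  | (true, _), (true, _) => 0
  end.

Lemma unit_flow_lift p : unit_flow w tau M p -> unit_flow w' (lift1 tau) M' (lift_flow p).
Proof.
move=> [ps [pa [pdiv _]]].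
apply: unit_flow_of_div => //; first exact: lift1_distribution.
- exact: lift1_eq0_M'.
- move=> [[] u] [[] v] //=.
  + by case: eqP => // _ /tau_eq0_rung.
  + by case: eqP => // _ /tau_eq0_rung ->; ring.
  + exact: ps.
- by move=> [[] u] [[] v] //=; try lra; case: (eqVneq u v) => [->|_]; lra.
- case=> -[] u; rewrite inE /= => uM'; rewrite rsum_layers /lift1 /=.
  + rewrite big1 // Rplus_0_l (rsum_only (y := u)) ?eqxx // => v /negbTE.
    by rewrite eq_sym => ->.
  + rewrite pdiv // (rsum_only (y := u)) ?eqxx => [|v /negbTE]; first ring.
    by rewrite eq_sym => ->.
Qed.

Lemma unit_flow_restrict P : unit_flow w' (lift1 tau) M' P ->
  unit_flow w tau M (fun u v => P (false, u) (false, v)) /\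
  forall u, P (true, u) (false, u) = tau u.
Proof.
move=> [Ps [Pa [Pdiv _]]].
have Prung u : P (true, u) (false, u) = tau u.
  have := Pdiv (true, u); rewrite inE /lift1 /= => /(_ isT) <-.
  rewrite rsum_layers big1 ?Rplus_0_l => [|v _]; last by apply: Ps.
  by rewrite (rsum_only (y := u)) // => v vu; apply: Ps; rewrite /= eq_sym (negbTE vu).
split=> //; apply: unit_flow_of_div => [//| |u v w0|u v|u uM].
- exact: tau_eq0_M.
- exact: Ps.
- exact: Pa.
- have := Pdiv (false, u); rewrite inE /= uM => /(_ isT).
  rewrite rsum_layers (rsum_only (y := u)) /lift1 /= => [|v vu]; last first.
    by apply: Ps; rewrite /= eq_sym (negbTE vu).
  by rewrite Pa Prung; lra.
Qed.

Lemma Reff_doubled_lift : Reff w' (lift1 tau) M' = Reff w tau M + cross_energy tau.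
Proof.
have [p fl] := unit_flow_exists wg wconn M0 taud tau_eq0_M.
apply: (Rinf_shift (L := 0)); first by exists (energy w p), p.
  by move=> _ [q [_ ->]]; apply: energy_ge0.
move=> e; split=> [[P [flP ->]] | [q [flq eq]]].
- have [fl0 Prung] := unit_flow_restrict flP.
  exists (fun u v => P (false, u) (false, v)); split=> //.
  by rewrite (energy_doubled (proj1 (proj2 flP)) Prung); ring.
- have flq' := unit_flow_lift flq.
  exists (lift_flow q); split=> //.
  rewrite (energy_doubled (proj1 (proj2 flq')) (tau := tau)) => [|u];
    last by rewrite /= eqxx.
  by rewrite (_ : energy w _ = energy w q) // -eq; ring.
Qed.

Lemma cross_energy_eq : cross_energy tau = C / W * \rsum_(u in S) tau u ^ 2 / sigma u.
Proof.
have W0 := Wtot_gt0.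
rewrite big_mkcond -big_Rmult_l; apply: eq_bigr => u _.
case: (boolP (u \in S)) => uS.
- have := rung_gt0 uS; have := sigma_gt0 uS; rewrite /rung.
  by case: Rlt_dec => //= *; field; lra.
- by rewrite rung_eq0 //; case: Rlt_dec => /= [|_]; lra.
Qed.

(* Cauchy--Schwarz in the form [tau^2 / sigma >= 2 tau - sigma], summed over [S]. *)
Lemma cross_energy_ge : C / W <= cross_energy tau.
Proof.
have W0 := Wtot_gt0.
rewrite cross_energy_eq -{1}(Rmult_1_r (C / W)).
apply: Rmult_le_compat_l; first by apply: Rlt_le; apply: Rdiv_lt_0_compat.
have <- : \rsum_(u : X) (2 * tau u - sigma u) = 1.
  by rewrite big_Rminus big_Rmult_l (proj2 taud) (proj2 sigmad); ring.
rewrite [X in _ <= X]big_mkcond; apply: big_Rle => u _; case: (boolP (u \in S)) => uS.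
- have su := sigma_gt0 uS; apply: (Rmult_le_reg_r (sigma u)) => //.
  have sq := pow2_ge_0 (tau u - sigma u).
  by rewrite /Rdiv Rmult_assoc Rinv_l; nra.
- by rewrite tau_eq0 // sigma_eq0 //; lra.
Qed.

End Lift.

Lemma Reff_set_doubled_bounds rho : distribution rho -> supp_sub rho S ->
  C / W <= Reff_set w' S' M' <= Reff w' (lift1 rho) M'.
Proof.
move=> rhod rhoS.
pose Q r := exists s', distribution s' /\ supp_sub s' S' /\ r = Reff w' s' M'.
have Qlb r : Q r -> C / W <= r.
  move=> [s' [s'd [s'S ->]]]; pose tau u := s' (true, u).
  have s'E : s' = lift1 tau.
    apply: functional_extensionality => -[[] u] //=; rewrite /lift1 /=.
    by apply: NNPP => /s'S; rewrite inE.
  have taud : distribution tau.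
    split=> [u|]; first exact: (proj1 s'd).
    rewrite -(proj2 s'd) rsum_layers [X in _ = _ + X]big1 ?Rplus_0_r // => u _.
    by rewrite s'E.
  have tauS : supp_sub tau S by move=> u /s'S; rewrite inE.
  have := Reff_ge0 wg wconn M0 taud (tau_eq0_M tauS).
  by rewrite s'E Reff_doubled_lift //; have := cross_energy_ge taud tauS; lra.
have rhoQ : Q (Reff w' (lift1 rho) M').
  exists (lift1 rho); split; first exact: lift1_distribution.
  by split=> // -[[] u] //= /rhoS; rewrite inE.
have [lb glb] := Rinf_glb (ex_intro _ _ rhoQ) Qlb.
by split; [apply: glb | apply: lb].
Qed.

Section Target.
Variables (rho : X -> R) (p : R).
Hypothesis rhod : distribution rho.
Hypothesis rhoS : supp_sub rho S.
Hypothesis p0 : 0 < p.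
Hypothesis rho_sigma : \rsum_(u in S) rho u ^ 2 / sigma u = 1 / p.

Lemma cross_energy_target : cross_energy rho = C / W / p.
Proof. by rewrite cross_energy_eq // rho_sigma /Rdiv Rmult_1_l. Qed.

Lemma Ceff_doubled_lift : Ceff w' (lift1 rho) M' = (Ceff w rho M / C + 1 / p) * (C + 2).
Proof.
have W0 := Wtot_gt0.
by rewrite /Ceff Reff_doubled_lift // cross_energy_target Wtot_doubled; field; lra.
Qed.

Lemma Ceff_set_piset_doubled_bounds :
  1 <= Ceff_set w' S' M' * piset w' S' <= Ceff w rho M / C + 1 / p.
Proof.
have W0 := Wtot_gt0; have WC0 : 0 < W / C by apply: Rdiv_lt_0_compat.
have [lo hi] := Reff_set_doubled_bounds rhod rhoS.
rewrite Reff_doubled_lift // cross_energy_target in hi.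
rewrite piset_doubled /Ceff_set Wtot_doubled /Ceff.
rewrite (_ : W * (C + 2) / C * _ * (1 / (C + 2)) = W / C * Reff_set w' S' M');
  last by field; lra.
split.
- by rewrite -(_ : W / C * (C / W) = 1); [apply: Rmult_le_compat_l; lra | field; lra].
- rewrite (_ : W * _ / C + 1 / p = W / C * (Reff w rho M + C / W / p)); last by field; lra.
  by apply: Rmult_le_compat_l; lra.
Qed.

End Target.

End DoubledGraph.

Theorem mainTheorem7 (X : finType) (w : X -> X -> R) (M S : {set X})
  (sigma : X -> R) (C : R)
  (Hw : weighted_graph w) (Hconn : connected w)
  (HM : M != set0)
  (Hsigma : distribution sigma)
  (HS : forall u, u \in S <-> sigma u <> 0)
  (HSM : [disjoint S & M])
  (HC : 0 < C) :
  let w' := doubled w sigma C in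
  let S' := [set a : bool * X | a.1 && (a.2 \in S)] in
  let M' := [set a : bool * X | ~~ a.1 && (a.2 \in M)] in
  piset w' S' = 1 / (C + 2) /\
  (forall (rho : X -> R) (p : R),
     distribution rho -> supp_sub rho S -> 0 < p ->
     \rsum_(u in S) (rho u ^ 2 / sigma u) = 1 / p ->
     Ceff w' (lift1 rho) M' = (Ceff w rho M / C + 1 / p) * (C + 2) /\
     1 / (Ceff_set w' S' M' * piset w' S')
       >= 1 / 2 * Rmin p (C / Ceff w rho M)).
Proof.
move=> w' S' M'; split; first exact: (piset_doubled Hw Hconn HM Hsigma HS HSM HC).
move=> rho p rhod rhoS p0 rho_sigma.
have Ceff' := Ceff_doubled_lift Hw Hconn HM Hsigma HS HSM HC rhod rhoS p0 rho_sigma.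
have [lo hi] :=
  Ceff_set_piset_doubled_bounds Hw Hconn HM Hsigma HS HSM HC rhod rhoS p0 rho_sigma.
split=> //; apply: half_min_le_inv HC p0 _ hi; lra.
Qed.
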